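(* Let $(q_n)_{n \ge 1}$ be a sequence of positive rational numbers, and let $(p_n)_{n \ge 1}$ be a sequence of prime numbers such that, for every $n \in \mathbb{N}$, $p_n \mid \mathsf{d}(q_n)$ and $p_n \nmid \mathsf{d}(q_k)$ for every $k \neq n$. Then the Puiseux monoid $M = \langle q_n \mid n \in \mathbb{N} \rangle$ is a length-finite-factorization monoid (LFFM).
   Context: For a positive rational $r$ in lowest terms $n/d$, $\mathsf{d}(r) := d$. A Puiseux monoid is an additive submonoid of $(\mathbb{Q}_{\ge 0},+)$. An atom of $M$ is a nonzero element $a$ such that $a=x+y$ with $x,y\in M$ forces $x=0$ or $y=0$; $M$ is atomic if each element is a finite sum of atoms. For nonzero $x \in M$, a factorization of $x$ is a formal (unordered) sum $a_1+\dots+a_\ell$ of atoms whose value is $x$, of length $\ell$; $\mathsf{Z}(x,\ell)$ denotes the set of factorizations of $x$ of length $\ell$. $M$ is an LFFM if $M$ is atomic and $\mathsf{Z}(x,\ell)$ is finite for every nonzero $x \in M$ and every $\ell \in \mathbb{N}$. *)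

From mathcomp Require Import all_boot all_order all_algebra.
Set Implicit Arguments. Unset Strict Implicit. Unset Printing Implicit Defensive.
Import Order.TTheory GRing.Theory Num.Theory.
Local Open Scope ring_scope.

Definition dnm (r : rat) : nat := `|denq r|%N.

Definition gen_monoid (q : nat -> rat) (x : rat) : Prop :=
  exists s : seq nat, x = \sum_(i <- s) q i.

Definition is_atom (M : rat -> Prop) (a : rat) : Prop :=
  M a /\ a != 0 /\
  forall x y, M x -> M y -> a = x + y -> x = 0 \/ y = 0.

Definition atomic (M : rat -> Prop) : Prop :=
  forall x, M x -> x != 0 ->
    exists s : seq rat, (forall a, a \in s -> is_atom M a) /\ x = \sum_(a <- s) a.

(* A factorization of x of length l, represented by a list of atoms;
   two lists represent the same (unordered) factorization iff they are
   permutations of each other. *)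
Definition is_factorization (M : rat -> Prop) (x : rat) (l : nat) (s : seq rat) : Prop :=
  (forall a, a \in s -> is_atom M a) /\ size s = l /\ \sum_(a <- s) a = x.

Definition Zfinite (M : rat -> Prop) (x : rat) (l : nat) : Prop :=
  exists L : seq (seq rat),
    forall s, is_factorization M x l s -> exists2 t, t \in L & perm_eq s t.

Definition LFFM (M : rat -> Prop) : Prop :=
  atomic M /\ forall x l, M x -> x != 0 -> Zfinite M x l.

(** Every generator [q n] is an atom because it alone carries the prime
    [p n] in its denominator: a sum of generators is [c * q n] plus a
    [p n]-integral rest, where [c] is the multiplicity of [q n], so [q n]
    is not a sum of generators other than itself.  Hence the atoms are
    exactly the generators.  If [q n] occurs [c > 0] times in a factorization
    of [x] of length [l], then [p n] divides [d(x)] or, [x] being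
    [p n]-integral, [p n] divides [c <= l]; so [p n <= l + d(x)].  As [p] is
    injective, only finitely many atoms occur in factorizations of length [l]. *)

From mathcomp Require Import all_boot all_order all_algebra.
From mathcomp Require Import ring lra.
From Stdlib Require Import Classical.
Set Implicit Arguments. Unset Strict Implicit. Unset Printing Implicit Defensive.
Import Order.TTheory GRing.Theory Num.Theory.
Local Open Scope ring_scope.

Definition pintegral (p : nat) (r : rat) : Prop :=
  exists (u : int) (v : nat), ~~ (p %| v)%N /\ r * v%:R = u%:~R.

Section PIntegral.
Variable p : nat.
Hypothesis p_pr : prime p.

Lemma pintegral0 : pintegral p 0.
Proof. by exists 0, 1%N; rewrite mul0r Euclid_dvd1. Qed.

Lemma pintegralD r1 r2 : pintegral p r1 -> pintegral p r2 -> pintegral p (r1 + r2).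
Proof.
move=> [u1 [v1 [p_v1 e1]]] [u2 [v2 [p_v2 e2]]].
exists (u1 * v2%:Z + u2 * v1%:Z), (v1 * v2)%N; split.
  by rewrite Euclid_dvdM // negb_or p_v1 p_v2.
rewrite natrM rmorphD !rmorphM /= -e1 -e2 -!pmulrn; ring.
Qed.

Lemma pintegralN r : pintegral p r -> pintegral p (- r).
Proof. by move=> [u [v [p_v e]]]; exists (- u), v; rewrite mulNr e rmorphN. Qed.

Lemma pintegral_sum (I : Type) (s : seq I) (P : pred I) (F : I -> rat) :
  (forall i, P i -> pintegral p (F i)) -> pintegral p (\sum_(i <- s | P i) F i).
Proof. by move=> FP; apply: big_ind => //; [exact: pintegral0 | exact: pintegralD]. Qed.

Lemma pintegral_coprime_den r : ~~ (p %| dnm r)%N -> pintegral p r.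
Proof.
move=> p_r; exists (numq r), (dnm r); split=> //.
by rewrite numqE natr_absz gtr0_norm ?denq_gt0.
Qed.

Lemma pintegral_natM_dvd r (c : nat) :
  (p %| dnm r)%N -> pintegral p (c%:R * r) -> (p %| c)%N.
Proof.
move=> p_den [u [v [p_v e]]].
have e_int : c%:Z * numq r * v%:Z = u * denq r.
  by apply: (@intr_inj rat); rewrite !rmorphM /= numqE -e -!pmulrn; ring.
have : (p %| absz (c%:Z * numq r * v%:Z)%R)%N by rewrite e_int abszM dvdn_mull.
rewrite !abszM !Euclid_dvdM // (negbTE p_v) orbF => /orP[// | p_num].
have : (p %| gcdn `|numq r| `|denq r|)%N by rewrite dvdn_gcd p_num.
by rewrite (eqP (coprime_num_den r)) Euclid_dvd1.
Qed.

Lemma not_pintegral r : (p %| dnm r)%N -> ~ pintegral p r.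
Proof.
move=> p_den pr; have := @pintegral_natM_dvd r 1 p_den.
by rewrite mul1r (Euclid_dvd1 p_pr) => /(_ pr).
Qed.

End PIntegral.

Lemma bounded_preimage_finite (f : nat -> nat) (B : nat) :
  injective f -> exists s : seq nat, forall n, (f n <= B)%N -> n \in s.
Proof.
move=> f_inj; elim: B => [|B [s Hs]].
  have [[n0 e0]|no0] := classic (exists n, f n = 0%N).
    by exists [:: n0] => n; rewrite leqn0 -e0 => /eqP/f_inj ->; rewrite mem_head.
  by exists [::] => n; rewrite leqn0 => /eqP e; case: no0; exists n.
have [[n0 e0]|noB] := classic (exists n, f n = B.+1).
  exists (n0 :: s) => n; rewrite leq_eqVlt in_cons => /orP[|/Hs ->]; last exact: orbT.
  by rewrite -e0 => /eqP/f_inj ->; rewrite eqxx.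
by exists s => n; rewrite leq_eqVlt => /orP[/eqP e|/Hs //]; case: noB; exists n.
Qed.

Lemma map_of_in_range (T : Type) (U : eqType) (f : T -> U) (s : seq U) :
  (forall a, a \in s -> exists x, a = f x) -> exists t, s = map f t.
Proof.
elim: s => [|a s IH] in_f; first by exists [::].
have [x ->] := in_f a (mem_head a s).
have [t ->] : exists t, s = map f t.
  by apply: IH => b sb; apply: in_f; rewrite in_cons sb orbT.
by exists (x :: t).
Qed.

Fixpoint words {T : Type} (A : seq T) (l : nat) : seq (seq T) :=
  if l is l'.+1 then [seq a :: w | a <- A, w <- words A l'] else [:: [::]].

Lemma mem_words (T : eqType) (A s : seq T) : {subset s <= A} -> s \in words A (size s).
Proof.
elim: s => [|a s IH] sA /=; first by rewrite mem_seq1.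
apply: allpairs_f; first by apply: sA; rewrite mem_head.
by apply: IH => b sb; apply: sA; rewrite in_cons sb orbT.
Qed.

Lemma Zfinite_of_atoms_in (M : rat -> Prop) x l (A : seq rat) :
  (forall s, is_factorization M x l s -> {subset s <= A}) -> Zfinite M x l.
Proof.
move=> sA; exists (words A l) => s fs; exists s => //.
by case: (fs) => _ [<- _]; exact/mem_words/sA.
Qed.

Lemma gen_monoid_atomic (q : nat -> rat) :
  (forall n, is_atom (gen_monoid q) (q n)) -> atomic (gen_monoid q).
Proof.
move=> q_atom x [s ->] _; exists (map q s); split; last by rewrite big_map.
by move=> a /mapP[n _ ->].
Qed.

Section DistinctPrimes.
Variables (q : nat -> rat) (p : nat -> nat).
Hypotheses (q_gt0 : forall n, 0 < q n) (p_pr : forall n, prime (p n))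
  (p_den : forall n, (p n %| dnm (q n))%N)
  (p_den_other : forall n k, k != n -> ~~ (p n %| dnm (q k))%N).

Let M := gen_monoid q.

Lemma gen_in_monoid n : M (q n).
Proof. by exists [:: n]; rewrite big_seq1. Qed.

Lemma sum_gen_ge0 (t : seq nat) : 0 <= \sum_(i <- t) q i.
Proof. by apply: sumr_ge0 => i _; exact: ltW. Qed.

Lemma gen_le_sum n (t : seq nat) : n \in t -> q n <= \sum_(i <- t) q i.
Proof.
move=> nt; rewrite (big_rem n nt) /= lerDl.
by apply: sumr_ge0 => i _; exact: ltW.
Qed.

Lemma sum_gen_count n (t : seq nat) :
  \sum_(i <- t) q i = (count_mem n t)%:R * q n + \sum_(i <- t | i != n) q i.
Proof.
rewrite (bigID (pred1 n)) /= mulr_natl -iter_addr_0 -big_const_seq.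
by congr (_ + _); apply: eq_bigr => i /eqP ->.
Qed.

Lemma pintegral_sum_other n (t : seq nat) :
  pintegral (p n) (\sum_(i <- t | i != n) q i).
Proof.
by apply: pintegral_sum => // i ni; apply/pintegral_coprime_den/p_den_other.
Qed.

Lemma dvd_count_of_pintegral n (t : seq nat) :
  pintegral (p n) (\sum_(i <- t) q i) -> (p n %| count_mem n t)%N.
Proof.
move=> pt; apply: (pintegral_natM_dvd (p_pr n) (p_den n)).
have -> : (count_mem n t)%:R * q n
    = \sum_(i <- t) q i + - \sum_(i <- t | i != n) q i.
  by rewrite (sum_gen_count n); ring.
by apply: pintegralD => //; apply/pintegralN/pintegral_sum_other.
Qed.

Lemma gen_atom n : is_atom M (q n).
Proof.
split; first exact: gen_in_monoid.
split=> [|_ _ [s1 ->] [s2 ->] e]; first by rewrite gt_eqF.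
have [n1|n1] := boolP (n \in s1).
  by right; apply/eqP; rewrite eq_le sum_gen_ge0 andbT;
     move: (gen_le_sum n1) (sum_gen_ge0 s2); rewrite e; lra.
have [n2|n2] := boolP (n \in s2).
  by left; apply/eqP; rewrite eq_le sum_gen_ge0 andbT;
     move: (gen_le_sum n2) (sum_gen_ge0 s1); rewrite e; lra.
have no_n : count_mem n (s1 ++ s2) = 0%N.
  by apply/count_memPn; rewrite mem_cat negb_or n1 n2.
case: (not_pintegral (p_pr n) (p_den n)).
by rewrite e -big_cat (sum_gen_count n) no_n mul0r add0r; exact: pintegral_sum_other.
Qed.

Lemma atom_gen a : is_atom M a -> exists n, a = q n.
Proof.
move=> [[[|i s] ->] [nz indec]]; first by rewrite big_nil eqxx in nz.
have s_in_M : M (\sum_(j <- s) q j) by exists s.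
exists i; have [e|e] := indec _ _ (gen_in_monoid i) s_in_M (big_cons _ _ _ _ _ _).
- by move: (q_gt0 i); rewrite e ltxx.
- by rewrite big_cons e addr0.
Qed.

Lemma p_inj : injective p.
Proof.
move=> n k e; apply/eqP; apply: contraT => kn.
by move: (p_den_other kn); rewrite eq_sym in kn; rewrite -e p_den.
Qed.

Lemma gen_index_bound n (t : seq nat) :
  n \in t -> (p n <= size t + dnm (\sum_(i <- t) q i))%N.
Proof.
move=> nt; have [p_x|p_x] := boolP (p n %| dnm (\sum_(i <- t) q i))%N.
  by rewrite (leq_trans (dvdn_leq _ p_x)) ?leq_addl // absz_gt0 gt_eqF ?denq_gt0.
have p_c := dvd_count_of_pintegral (pintegral_coprime_den p_x).
apply: leq_trans (leq_addr _ _); apply: leq_trans (count_size (pred1 n) t).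
by apply: dvdn_leq p_c; rewrite -has_count has_pred1.
Qed.

End DistinctPrimes.

Theorem proposition4p10 (q : nat -> rat) (p : nat -> nat)
  (hq : forall n, 0 < q n)
  (hp : forall n, prime (p n))
  (hdiv : forall n, (p n %| dnm (q n))%N)
  (hndiv : forall n k, k != n -> ~~ (p n %| dnm (q k))%N) :
  LFFM (gen_monoid q).
Proof.
split; first by apply: gen_monoid_atomic => n; exact: gen_atom hq hp hdiv hndiv n.
move=> x l _ _.
have [N bound_N] := bounded_preimage_finite (l + dnm x) (p_inj hdiv hndiv).
apply: (@Zfinite_of_atoms_in _ _ _ (map q N)) => s [s_atoms [size_s sum_s]].
have [t s_t] : exists t, s = map q t.
  by apply: map_of_in_range => a /s_atoms/(atom_gen hq).
rewrite s_t => _ /mapP[n nt ->]; rewrite map_f // bound_N //.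
by rewrite -size_s -sum_s s_t size_map big_map (gen_index_bound hp hdiv hndiv).
Qed.
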